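(* Let $M$ be a right $R$-module with $S=\mathrm{End}_R(M)$ such that $M$ is flat as a left $S$-module, and let $A$ be a right $R$-module. Then (i) $A\in\mathfrak{E}_M$ if and only if $\mathrm{Hom}_R(M,A)$ is an injective right $S$-module; (ii) $A\in\mathfrak{F}_M$ if and only if $\mathrm{Hom}_R(M,A)$ is an f-injective right $S$-module.
   Context: $\mathrm{Hom}_R(M,A)$ is a right $S$-module via composition. A module $N$ is $M$-generated if it is an epimorphic image of a direct sum of copies of $M$, and finitely $M$-generated if there is an epimorphism $M^{(n)}\to N$ for some integer $n>0$. $\mathfrak{E}_M$ (resp. $\mathfrak{F}_M$) is the class of right $R$-modules $A$ such that for every monomorphism $\alpha:N\to M$ with $N$ $M$-generated (resp. finitely $M$-generated) and every homomorphism $\beta:N\to A$ there is $\gamma:M\to A$ with $\beta=\gamma\alpha$. A right $S$-module $X$ is f-injective if every homomorphism from a finitely generated right ideal of $S$ to $X$ extends to $S$. *)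

(* Right modules over a ring R are modelled as left modules
   over the converse ring R^c (so  a *: x  in  lmodType R^c  means  x·a). *)
From HB Require Import structures.
From Stdlib Require List.
From mathcomp Require Import all_boot all_order all_algebra.
Set Implicit Arguments. Unset Strict Implicit. Unset Printing Implicit Defensive.
Import GRing.Theory.
Local Open Scope ring_scope.

Section Defs.
Variables (R : pzRingType).

(* finitely supported families  I -> M  (the elements of M^(I)) *)
Definition finsupp (I : Type) (M : zmodType) (f : I -> M) : Prop :=
  exists s : list I, forall i, ~ List.In i s -> f i = 0.

Definition epi_from_sum (M N : lmodType R^c) (I : Type) (p : (I -> M) -> N) : Prop :=
  (forall (a : R^c) (f g : I -> M), finsupp f -> finsupp g ->
      p (fun i => a *: f i + g i) = a *: p f + p g) /\
  (forall n : N, exists2 f : I -> M, finsupp f & p f = n).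

Definition M_generated (M N : lmodType R^c) : Prop :=
  exists (I : Type) (p : (I -> M) -> N), epi_from_sum p.

Definition fin_M_generated (M N : lmodType R^c) : Prop :=
  exists (n : nat) (p : ('I_n -> M) -> N), (0 < n)%N /\ epi_from_sum p.

Definition class_E (M A : lmodType R^c) : Prop :=
  forall (N : lmodType R^c) (alpha : N -> M) (beta : N -> A),
    M_generated M N -> linear alpha -> injective alpha -> linear beta ->
    exists gamma : M -> A, linear gamma /\ forall n, beta n = gamma (alpha n).

Definition class_F (M A : lmodType R^c) : Prop :=
  forall (N : lmodType R^c) (alpha : N -> M) (beta : N -> A),
    fin_M_generated M N -> linear alpha -> injective alpha -> linear beta ->
    exists gamma : M -> A, linear gamma /\ forall n, beta n = gamma (alpha n).

(* act realizes S as End_R(M): a ring isomorphism S -> End_R(M); the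
   left S-module structure of M is  s . m = act s m *)
Definition is_End (S : pzRingType) (M : lmodType R^c) (act : S -> M -> M) : Prop :=
  [/\ (forall s, linear (act s)),
      (forall m, act 1 m = m),
      (forall s t m, act (s * t) m = act s (act t m)),
      (forall s t m, act (s + t) m = act s m + act t m)
    & ((forall s t, (forall m, act s m = act t m) -> s = t) /\
       forall f : M -> M, linear f -> exists s, forall m, act s m = f m)].

Variables (S : pzRingType) (M : lmodType R^c) (act : S -> M -> M).

Definition balanced (X : lmodType S^c) (Z : zmodType) (b : X -> M -> Z) : Prop :=
  [/\ (forall x y m, b (x + y) m = b x m + b y m),
      (forall x m n, b x (m + n) = b x m + b x n)
    & (forall (s : S) x m, b ((s : S^c) *: x) m = b x (act s m))].

(* the element  sum_i x_i (x) m_i  of X (x)_S M is zero (tested against the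
   universal property of the tensor product) *)
Definition tensor_zero (X : lmodType S^c) (t : seq (X * M)) : Prop :=
  forall (Z : zmodType) (b : X -> M -> Z), balanced b ->
    \sum_(p <- t) b p.1 p.2 = 0.

(* M is flat as a left S-module: - (x)_S M preserves monomorphisms *)
Definition flat_left : Prop :=
  forall (X Y : lmodType S^c) (f : X -> Y), linear f -> injective f ->
    forall t : seq (X * M),
      tensor_zero [seq (f p.1, p.2) | p <- t] -> tensor_zero t.

Variable (A : lmodType R^c).

(* h : X -> Hom_R(M,A) is a right S-module homomorphism, for X a right
   S-module; the right S-action on Hom_R(M,A) is  (g . s) = g o act s *)
Definition SHom (X : lmodType S^c) (h : X -> M -> A) : Prop :=
  [/\ (forall x, linear (h x)),
      (forall x y m, h (x + y) m = h x m + h y m)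
    & (forall (s : S) x m, h ((s : S^c) *: x) m = h x (act s m))].

Definition Hom_injective : Prop :=
  forall (X Y : lmodType S^c) (g : X -> Y) (h : X -> M -> A),
    linear g -> injective g -> SHom h ->
    exists2 k : Y -> M -> A, SHom k & forall x m, k (g x) m = h x m.

Definition in_right_ideal (gens : seq S) (s : S) : Prop :=
  exists c : 'I_(size gens) -> S, s = \sum_(i < size gens) gens`_i * c i.

(* phi : I -> Hom_R(M,A) is a right S-module homomorphism on the right
   ideal I = P (phi given on elements of I) *)
Definition SHom_on (P : S -> Prop) (phi : S -> M -> A) : Prop :=
  [/\ (forall s, P s -> linear (phi s)),
      (forall s t m, P s -> P t -> phi (s + t) m = phi s m + phi t m)
    & (forall s t m, P s -> phi (s * t) m = phi s (act t m))].

Definition Hom_f_injective : Prop :=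
  forall (gens : seq S) (phi : S -> M -> A),
    SHom_on (in_right_ideal gens) phi ->
    exists2 psi : S -> M -> A, SHom_on (fun _ => True) psi &
      forall s m, in_right_ideal gens s -> psi s m = phi s m.

End Defs.

(* Both equivalences are
   proved by passing through an extension property of right ideals J of S:
   every S-homomorphism phi : J -> Hom_R(M,A) is of the form  s |-> gamma o s
   for one gamma in Hom_R(M,A) ([ideals_extend], and [fg_ideals_extend] for
   finitely generated J).
   - Hom_R(M,A) is injective iff all right ideals extend (Baer's criterion,
     proved with Zorn's lemma on graphs of partial extensions), and it is
     f-injective iff finitely generated right ideals extend.
   - If (finitely generated) right ideals extend then A lies in E_M (F_M):
     for alpha : N -> M monic with N generated by p : M^(I) -> N, apply the
     extension property to  s |-> beta o alpha^-1 o s  on the right ideal of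
     the s with image in alpha(N) (resp. the ideal generated by the finitely
     many endomorphisms alpha o p o delta_i).
   - Conversely, if A lies in E_M (F_M), then for a (finitely generated) right
     ideal J the submodule JM of M is (finitely) M-generated, and by flatness
     phi induces a well defined  beta : JM -> A,  s m |-> phi(s)(m); the
     resulting gamma : M -> A extends phi. *)
From HB Require Import structures.
From mathcomp Require Import all_boot all_order all_algebra.
From mathcomp Require Import boolp classical_sets fsbigop.
Import GRing.Theory.
Local Open Scope classical_set_scope.
Local Open Scope ring_scope.
Set Implicit Arguments. Unset Strict Implicit.

Lemma In_mem (T : eqType) (x : T) (s : seq T) : List.In x s <-> x \in s.
Proof.
elim: s => [|y s IH] //=; rewrite in_cons.
split=> [[->|/IH ->]|/orP[/eqP->|/IH]]; rewrite ?eqxx ?orbT //; by [left|right].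
Qed.

Lemma not_In_cat (T : Type) (x : T) (s t : seq T) :
  ~ List.In x (s ++ t) -> ~ List.In x s /\ ~ List.In x t.
Proof. by move=> xst; split=> ?; apply: xst; apply: List.in_or_app; [left|right]. Qed.

Section PropLinear.
Variables (K : pzRingType) (U V : lmodType K) (f : U -> V) (f_lin : linear f).

Definition linmap : {linear U -> V} :=
  HB.pack_for {linear U -> V} f (GRing.isLinear.Build K U V _ f f_lin).

Lemma lin0 : f 0 = 0. Proof. exact: (linear0 linmap). Qed.
Lemma linD x y : f (x + y) = f x + f y. Proof. exact: (linearD linmap). Qed.
Lemma linN x : f (- x) = - f x. Proof. exact: (linearN linmap). Qed.
Lemma linB x y : f (x - y) = f x - f y. Proof. exact: (linearB linmap). Qed.
Lemma linZ a x : f (a *: x) = a *: f x. Proof. exact: (linearZZ linmap). Qed.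
Lemma lin_sum (I : Type) (r : seq I) (F : I -> U) :
  f (\sum_(i <- r) F i) = \sum_(i <- r) f (F i).
Proof. exact: (linear_sum linmap). Qed.
End PropLinear.

Record submodule (K : pzRingType) (V : lmodType K) := Submodule {
  in_sub :> V -> Prop;
  sub0 : in_sub 0;
  subL : forall a u v, in_sub u -> in_sub v -> in_sub (a *: u + v) }.

Definition sub_pred K V (Q : @submodule K V) : {pred V} := fun v => `[< Q v >].

Lemma sub_pred_closed K V (Q : @submodule K V) : subsemimod_closed (sub_pred Q).
Proof.
have Q0 := sub0 Q; have QL := @subL _ _ Q.
split; first split.
- exact/asboolP.
- move=> u v /asboolP Qu /asboolP Qv; apply/asboolP.
  by rewrite -[u]scale1r; apply: QL.
- move=> a u /asboolP Qu; apply/asboolP.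
  by rewrite -[_ *: u]addr0; apply: QL.
Qed.

HB.instance Definition _ K V Q :=
  GRing.isSubmodClosed.Build K V (@sub_pred K V Q) (@sub_pred_closed K V Q).

Record submod_type K V (Q : @submodule K V) :=
  SubmodElt { submod_val : V; _ : submod_val \in sub_pred Q }.
HB.instance Definition _ K V Q := [isSub for @submod_val K V Q].
HB.instance Definition _ K V Q := [Choice of @submod_type K V Q by <:].
HB.instance Definition _ K V Q := [SubChoice_isSubLmodule of @submod_type K V Q by <:].

Section SubModuleTheory.
Variables (K : pzRingType) (V : lmodType K) (Q : submodule V).

Lemma subP (x : submod_type Q) : Q (val x).
Proof. exact/asboolP/(valP x). Qed.

Lemma insubdK (v : V) : Q v -> val (insubd (0 : submod_type Q) v) = v.
Proof. by move=> Qv; rewrite val_insubd ifT //; apply/asboolP. Qed.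
End SubModuleTheory.

Section Generation.
Variables (R : pzRingType) (M N : lmodType R^c).

Definition delta (I : Type) (i : I) (m : M) : I -> M :=
  fun j => if pselect (j = i) then m else 0.

Lemma delta_finsupp (I : Type) (i : I) (m : M) : finsupp (delta i m).
Proof.
by exists [:: i] => j ji; rewrite /delta; case: pselect => // e; case: ji; left.
Qed.

Lemma finsupp_add (I : Type) (f g : I -> M) :
  finsupp f -> finsupp g -> finsupp (fun i => f i + g i).
Proof.
move=> [sf fs] [sg gs]; exists (sf ++ sg) => i /(@not_In_cat _ i sf sg)[nf ng].
by rewrite fs // gs // addr0.
Qed.

Lemma finsupp_fin (I : finType) (f : I -> M) : finsupp f.
Proof. by exists (enum I) => i /In_mem; rewrite mem_enum. Qed.

Lemma finsupp_additive (I : Type) (p : (I -> M) -> N) :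
    (forall (a : R^c) f g, finsupp f -> finsupp g ->
       p (fun i => a *: f i + g i) = a *: p f + p g) ->
  forall f g, finsupp f -> finsupp g -> p (fun i => f i + g i) = p f + p g.
Proof.
move=> p_lin f g ff fg; rewrite -[p f]scale1r -p_lin //.
by congr (p _); apply: funext => i; rewrite scale1r.
Qed.

Lemma fsum_finsupp (I : choiceType) (phi : I -> M -> N) (f : I -> M)
    (s : seq I) :
  (forall i, linear (phi i)) -> (forall i, ~ List.In i s -> f i = 0) ->
  \sum_(i \in [set: I]) phi i (f i) = \sum_(i <- undup s) phi i (f i).
Proof.
move=> phi_lin fs; rewrite [RHS]fsbig_seq ?undup_uniq //.
apply: esym; apply: fsbig_widen => // i [_ /= si]; rewrite /= fs ?(lin0 (phi_lin i)) //.
by move/In_mem; rewrite -mem_undup.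
Qed.

Lemma M_generated_of_span (I : choiceType) (phi : I -> M -> N) :
    (forall i, linear (phi i)) ->
    (forall n, exists r : seq (I * M), n = \sum_(q <- r) phi q.1 q.2) ->
  M_generated M N.
Proof.
move=> phi_lin span; pose p f := \sum_(i \in [set: I]) phi i (f i).
have p_lin a (f g : I -> M) : finsupp f -> finsupp g ->
    p (fun i => a *: f i + g i) = a *: p f + p g.
  move=> [sf fs] [sg gs].
  have out i : ~ List.In i (sf ++ sg) -> f i = 0 /\ g i = 0.
    by move=> /(@not_In_cat _ i sf sg)[nf ng]; split; [apply: fs | apply: gs].
  rewrite /p !(fsum_finsupp (s := sf ++ sg)) //;
    try by move=> i /out[fi gi]; rewrite ?fi ?gi ?scaler0 ?addr0.
  rewrite scaler_sumr -big_split; apply: eq_bigr => i _.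
  by rewrite linD ?linZ.
have p_add := finsupp_additive p_lin.
have p_delta i m : p (delta i m) = phi i m.
  rewrite /p (fsum_finsupp (s := [:: i])) //= ?big_seq1 /delta.
    by case: pselect.
  by move=> j ji; case: pselect => // e; case: ji; left.
exists I, p; split=> // n; have [r ->] := span n; elim: r => [|q r [f fs ef]].
  exists (fun _ => 0); first by exists [::].
  by rewrite big_nil /p (fsum_finsupp (s := [::])) ?big_nil.
exists (fun i => delta q.1 q.2 i + f i); first exact: finsupp_add (delta_finsupp _ _) fs.
rewrite big_cons -ef p_add //; last exact: delta_finsupp.
by have -> : p (fun i => delta q.1 q.2 i) = phi q.1 q.2 := p_delta q.1 q.2.
Qed.

(* A module spanned by the images of finitely many linear maps  M -> N  is
   finitely M-generated (one extra, unused, summand makes the number of copies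
   of M positive). *)
Lemma fin_M_generated_of_span (n : nat) (phi : 'I_n -> M -> N) :
    (forall k, linear (phi k)) ->
    (forall x, exists f : 'I_n -> M, x = \sum_(k < n) phi k (f k)) ->
  fin_M_generated M N.
Proof.
move=> phi_lin span.
exists n.+1, (fun f => \sum_(k < n) phi k (f (lift ord_max k))); split=> //; split.
  move=> a f g _ _; rewrite scaler_sumr -big_split; apply: eq_bigr => k _.
  by rewrite linD ?linZ.
move=> x; have [f ->] := span x.
exists (fun i => oapp f 0 (unlift ord_max i)); first exact: finsupp_fin.
by apply: eq_bigr => k _; rewrite liftK.
Qed.

Lemma epi_span (I : Type) (p : (I -> M) -> N) : epi_from_sum p ->
  forall n, exists r : seq (I * M), n = \sum_(q <- r) p (delta q.1 q.2).
Proof.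
move=> [p_lin p_onto] n; have [f [s fs] <-] := p_onto n.
have p_add := finsupp_additive p_lin.
elim: s f fs => [|i s IH] f fs.
  have f0 : finsupp (fun _ : I => 0 : M) by exists [::].
  have -> : f = (fun _ => 0) by apply: funext => j; apply: fs.
  exists [::]; rewrite big_nil; apply: (addrI (p (fun _ => 0))).
  by rewrite -p_add // !addr0.
pose f' j := if pselect (j = i) then 0 else f j.
have f's j : ~ List.In j s -> f' j = 0.
  by move=> js; rewrite /f'; case: pselect => // ji; apply: fs => -[ij|//]; apply: ji.
have [r er] := IH f' f's; exists ((i, f i) :: r).
rewrite big_cons -er -p_add; [|exact: delta_finsupp|by exists s].
congr (p _); apply: funext => j; rewrite /delta /f' /=.
by destruct (pselect (j = i)) as [e|ne]; [subst j; rewrite addr0 | rewrite add0r].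
Qed.
End Generation.

Section HomModule.
Variables (R S : pzRingType) (M A : lmodType R^c) (act : S -> M -> M).
Hypothesis act_End : is_End act.

Lemma act_lin s : linear (act s). Proof. by case: act_End. Qed.
Lemma act1 m : act 1 m = m. Proof. by case: act_End. Qed.
Lemma actM s t m : act (s * t) m = act s (act t m). Proof. by case: act_End. Qed.
Lemma actD s t m : act (s + t) m = act s m + act t m. Proof. by case: act_End. Qed.
Lemma act_onto (f : M -> M) : linear f -> exists s, forall m, act s m = f m.
Proof. by case: act_End => _ _ _ _ [_]; apply. Qed.

Lemma act0 m : act 0 m = 0.
Proof. by apply: (addrI (act 0 m)); rewrite -actD !addr0. Qed.
Lemma actN s m : act (- s) m = - act s m.
Proof. by apply: (addrI (act s m)); rewrite -actD !subrr act0. Qed.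
Lemma actB s t m : act (s - t) m = act s m - act t m.
Proof. by rewrite actD actN. Qed.
Lemma act_sum (I : Type) (r : seq I) (F : I -> S) m :
  act (\sum_(i <- r) F i) m = \sum_(i <- r) act (F i) m.
Proof. by elim: r => [|i r IH]; rewrite ?big_nil ?act0 // !big_cons actD IH. Qed.

Lemma regular_scale (a : S^c) (x : (S^c)^o) : a *: x = (x : S) * (a : S).
Proof. by []. Qed.

Lemma scale_mul (Y : lmodType S^c) (s t : S) (y : Y) :
  ((s * t : S) : S^c) *: y = (t : S^c) *: ((s : S^c) *: y).
Proof. by rewrite scalerA. Qed.

Definition right_ideal (J : S -> Prop) : Prop :=
  [/\ J 0, (forall s t, J s -> J t -> J (s + t)) & (forall s t, J s -> J (s * t))].

Lemma right_ideal_gen (gens : seq S) : right_ideal (in_right_ideal gens).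
Proof.
split.
- by exists (fun _ => 0); rewrite big1 // => i _; rewrite mulr0.
- move=> _ _ [c ->] [d ->]; exists (fun i => c i + d i).
  by rewrite -big_split; apply: eq_bigr => i _; rewrite mulrDr.
- move=> _ t [c ->]; exists (fun i => c i * t).
  by rewrite mulr_suml; apply: eq_bigr => i _; rewrite mulrA.
Qed.

Lemma in_right_ideal_gen (gens : seq S) (x : S) : x \in gens -> in_right_ideal gens x.
Proof.
move=> gx; pose k := Ordinal (etrans (index_mem x gens) gx).
exists (fun i => (i == k)%:R); rewrite (bigD1 k) //= eqxx mulr1 nth_index //.
by rewrite big1 ?addr0 // => i /negPf->; rewrite mulr0.
Qed.

Lemma in_right_ideal_min (J : S -> Prop) (gens : seq S) (s : S) :
  right_ideal J -> (forall x, x \in gens -> J x) -> in_right_ideal gens s -> J s.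
Proof.
move=> [J0 JD JM] Jgens [c ->]; apply: (big_ind J) => // i _.
by apply/JM/Jgens/mem_nth.
Qed.

Definition ideal_submodule (J : S -> Prop) (J_ideal : right_ideal J) :
  submodule ((S^c)^o).
Proof.
refine (@Submodule _ _ (J : (S^c)^o -> Prop) _ _); case: J_ideal => J0 JD JM //.
by move=> a u v Ju Jv; rewrite regular_scale; apply/JD/Jv/JM.
Defined.

(* phi : J -> Hom_R(M,A) is the restriction of  s |-> gamma o s  for some
   gamma in Hom_R(M,A); by Baer-type arguments this is what injectivity means *)
Definition extends_from (J : S -> Prop) (phi : S -> M -> A) : Prop :=
  exists2 gamma : M -> A, linear gamma & forall s m, J s -> phi s m = gamma (act s m).

Definition ideals_extend : Prop :=
  forall J phi, right_ideal J -> SHom_on act J phi -> extends_from J phi.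

Definition fg_ideals_extend : Prop :=
  forall gens phi, SHom_on act (in_right_ideal gens) phi ->
    extends_from (in_right_ideal gens) phi.

Lemma Hom_f_injective_iff : Hom_f_injective act A <-> fg_ideals_extend.
Proof.
split=> [fi gens phi phi_hom | ext gens phi phi_hom].
  have [psi [psi_lin _ psiM] psi_phi] := fi gens phi phi_hom.
  exists (psi 1) => [|s m Js]; first exact: psi_lin.
  by rewrite -psi_phi // -{1}[s]mul1r psiM.
have [gamma gamma_lin phi_gamma] := ext gens phi phi_hom.
exists (fun s m => gamma (act s m)); last by move=> s m Js; rewrite phi_gamma.
split=> [s _ a u v | s t m _ _ | s t m _].
- by rewrite act_lin (linD gamma_lin) (linZ gamma_lin).
- by rewrite actD (linD gamma_lin).
- by rewrite actM.
Qed.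

(* If Hom_R(M,A) is injective, every S-homomorphism from a right ideal J into
   it extends to S, hence is given by a single gamma = (extension at 1). *)
Lemma Hom_injective_extend : Hom_injective act A -> ideals_extend.
Proof.
move=> inj J phi J_ideal [phi_lin phiD phiM].
pose X := submod_type (ideal_submodule J_ideal).
have XJ (x : X) : J (val x) := subP x.
have h_hom : SHom act (fun (x : X) => phi (val x)).
  split=> [x | x y m | s x m]; first exact/phi_lin/XJ.
    by rewrite raddfD phiD //; apply: XJ.
  exact: phiM (val x) s m (XJ x).
have [k [k_lin _ kM] k_phi] :=
  inj X _ val _ (linearP (val : X -> (S^c)^o)) val_inj h_hom.
exists (k 1) => [|s m Js]; first exact: k_lin.
have -> : s = val (insubd (0 : X) s) by rewrite insubdK.
by rewrite -k_phi -kM regular_scale mul1r.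
Qed.

(* Partial extensions of h along
   g are handled through their graphs, which a Zorn argument maximises. *)
Section Baer.
Hypothesis ext : ideals_extend.
Variables (X Y : lmodType S^c) (g : X -> Y) (h : X -> M -> A).
Hypotheses (g_lin : linear g) (g_inj : injective g) (h_hom : SHom act h).

Definition ext_graph (G : set (Y * (M -> A))) : Prop :=
  [/\ (forall y u v, G (y, u) -> G (y, v) -> u = v),
      (forall x, G (g x, h x)),
      (forall y u, G (y, u) -> linear u),
      (forall y u z v, G (y, u) -> G (z, v) -> G (y + z, fun m => u m + v m))
    & (forall (s : S) y u, G (y, u) -> G ((s : S^c) *: y, fun m => u (act s m)))].

Lemma ext_graph_base : ext_graph [set (g x, h x) | x in [set: X]].
Proof.
have [h_lin hD hM] := h_hom; split.
- move=> _ _ v [x _ [<- <-]] [x' _ [/g_inj -> <-]] //.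
- by move=> x; exists x.
- by move=> _ _ [x _ [_ <-]]; apply: h_lin.
- move=> _ _ _ _ [x _ [<- <-]] [x' _ [<- <-]]; exists (x + x') => //.
  by rewrite (linD g_lin); congr pair; apply: funext => m; rewrite hD.
- move=> s _ _ [x _ [<- <-]]; exists ((s : S^c) *: x) => //.
  by rewrite (linZ g_lin); congr pair; apply: funext => m; rewrite hM.
Qed.

Lemma ext_graph_chain (F : set (set (Y * (M -> A)))) (G0 : set (Y * (M -> A))) :
    F `<=` ext_graph -> total_on F subset -> F G0 ->
  ext_graph (\bigcup_(G in F) G).
Proof.
move=> F_ext F_tot FG0.
have common p q : (\bigcup_(G in F) G) p -> (\bigcup_(G in F) G) q ->
    exists2 G, F G & G p /\ G q.
  move=> [G1 FG1 G1p] [G2 FG2 G2q].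
  by case: (F_tot _ _ FG1 FG2) => [/(_ p G1p) G2p | /(_ q G2q) G1q];
    [exists G2 | exists G1].
split.
- move=> y u v yu yv; have [G /F_ext[G_fun _ _ _ _] [Gyu Gyv]] := common _ _ yu yv.
  exact: G_fun Gyu Gyv.
- by move=> x; exists G0 => //; have [_ Gg _ _ _] := F_ext _ FG0.
- by move=> y u [G /F_ext[_ _ G_lin _ _] /G_lin].
- move=> y u z v yu zv; have [G FG [Gyu Gzv]] := common _ _ yu zv.
  by exists G => //; have [_ _ _ GD _] := F_ext _ FG; apply: GD.
- by move=> s y u [G FG Gyu]; exists G => //; have [_ _ _ _ GM] := F_ext _ FG; apply: GM.
Qed.

Definition graph_dom (G : set (Y * (M -> A))) (y : Y) : Prop := exists u, G (y, u).

Definition graph_val (G : set (Y * (M -> A))) (y : Y) : M -> A :=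
  if pselect (graph_dom G y) is left d then projT1 (cid d) else fun _ => 0.

(* One step of the Zorn argument: a partial extension G can be enlarged so
   that its domain contains a given y0. *)
Section Step.
Variables (G : set (Y * (M -> A))) (G_ext : ext_graph G) (y0 : Y).

Lemma graph_valE y u : G (y, u) -> graph_val G y = u.
Proof.
move=> Gyu; rewrite /graph_val; case: pselect => [d|[]]; last by exists u.
by have [G_fun _ _ _ _] := G_ext; exact: G_fun (projT2 (cid d)) Gyu.
Qed.

Lemma graph_opp y u : G (y, u) -> G (- y, fun m => - u m).
Proof.
have [_ _ G_lin _ GM] := G_ext => Gyu; have := GM (-1) _ _ Gyu.
have -> : ((-1 : S) : S^c) *: y = - y by rewrite scaleN1r.
congr G; congr pair; apply: funext => m.
by rewrite actN act1 (linN (G_lin _ _ Gyu)).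
Qed.

Definition conductor (s : S) : Prop := graph_dom G ((s : S^c) *: y0).

Lemma conductor_ideal : right_ideal conductor.
Proof.
have [_ Gg _ GD GM] := G_ext; split.
- exists (fun m => h 0 (act 0 m)); rewrite scale0r.
  by have := GM 0 _ _ (Gg 0); rewrite scale0r.
- by move=> s t [u Gu] [v Gv]; exists (fun m => u m + v m); rewrite scalerDl; apply: GD.
- move=> s t [u Gu]; exists (fun m => u (act t m)).
  by rewrite scale_mul; apply: GM.
Qed.

Lemma conductor_hom :
  SHom_on act conductor (fun s => graph_val G ((s : S^c) *: y0)).
Proof.
have [_ _ G_lin GD GM] := G_ext.
split=> [s [u Gu] | s t m [u Gu] [v Gv] | s t m [u Gu]].
- by rewrite (graph_valE Gu); apply: G_lin Gu.
- by rewrite scalerDl (graph_valE (GD _ _ _ _ Gu Gv)) (graph_valE Gu) (graph_valE Gv).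
- by rewrite scale_mul (graph_valE (GM _ _ _ Gu)) (graph_valE Gu).
Qed.

Variables (gamma : M -> A) (gamma_lin : linear gamma).
Hypothesis gamma_ext :
  forall s m, conductor s -> graph_val G ((s : S^c) *: y0) m = gamma (act s m).

Definition graph_step : set (Y * (M -> A)) :=
  [set yu | exists p u (s : S), G (p, u) /\
     yu = (p + (s : S^c) *: y0, fun m => u m + gamma (act s m))].

Lemma graph_step_fun p u s p' u' s' : G (p, u) -> G (p', u') ->
    p + (s : S^c) *: y0 = p' + (s' : S^c) *: y0 ->
  (fun m => u m + gamma (act s m)) = (fun m => u' m + gamma (act s' m)).
Proof.
have [_ _ _ GD _] := G_ext => Gpu Gpu' e.
have e' : ((s - s' : S) : S^c) *: y0 = p' - p.
  have -> : ((s - s' : S) : S^c) *: y0 = (s : S^c) *: y0 - (s' : S^c) *: y0.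
    by rewrite -scalerBl.
  by rewrite -[(s : S^c) *: y0](addKr p) e addrA addrK addrC.
have G_diff := GD _ _ _ _ Gpu' (graph_opp Gpu).
have cond : conductor (s - s') by rewrite /conductor e'; exists (fun m => u' m - u m).
apply: funext => m; have := gamma_ext m cond.
rewrite e' (graph_valE G_diff) actB (linB gamma_lin) => d.
by rewrite -[u' m](subrK (u m)) d addrAC subrK addrC.
Qed.

Lemma graph_step_ext : ext_graph graph_step.
Proof.
have [_ Gg G_lin GD GM] := G_ext.
have act_gamma s : linear (fun m => gamma (act s m)).
  by move=> a v w; rewrite act_lin (linD gamma_lin) (linZ gamma_lin).
split.
- move=> y v w [p [u [s [Gpu [-> ->]]]]] [p' [u' [s' [Gpu' [e ->]]]]].
  exact: graph_step_fun Gpu Gpu' e.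
- move=> x; exists (g x), (h x), 0; split=> //; rewrite scale0r addr0.
  by congr pair; apply: funext => m; rewrite act0 (lin0 gamma_lin) addr0.
- move=> y v [p [u [s [Gpu [_ ->]]]]] a w w'.
  by rewrite (G_lin _ _ Gpu) act_gamma scalerDr addrACA.
- move=> y v z w [p [u [s [Gpu [-> ->]]]]] [p' [u' [s' [Gpu' [-> ->]]]]].
  exists (p + p'), (fun m => u m + u' m), (s + s'); split; first exact: GD.
  congr pair; first by rewrite scalerDl addrACA.
  by apply: funext => m; rewrite actD (linD gamma_lin) addrACA.
- move=> r y v [p [u [s [Gpu [-> ->]]]]].
  exists ((r : S^c) *: p), (fun m => u (act r m)), (s * r); split; first exact: GM.
  congr pair; first by rewrite scalerDr scalerA.
  by apply: funext => m; rewrite actM.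
Qed.

Lemma graph_step_sub : G `<=` graph_step.
Proof.
move=> [y u] Gyu; exists y, u, 0; split=> //; rewrite scale0r addr0.
by congr pair; apply: funext => m; rewrite act0 (lin0 gamma_lin) addr0.
Qed.

Lemma graph_step_y0 : graph_dom graph_step y0.
Proof.
have [_ Gg _ _ _] := G_ext.
exists (fun m => h 0 m + gamma (act 1 m)), (g 0), (h 0), 1; split=> //.
by rewrite (lin0 g_lin) add0r scale1r.
Qed.
End Step.

Lemma maximal_ext_graph :
  exists2 G, ext_graph G & forall G', ext_graph G' -> G `<=` G' -> G' `<=` G.
Proof.
pose T := {G : set (Y * (M -> A)) | ext_graph G}.
pose base : T := exist _ _ ext_graph_base.
pose le (a b : T) := `[< sval a `<=` sval b >].
have [[G G_ext] G_max] : exists t : T, premaximal le t.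
  apply: (ZL_preorder base).
  - by move=> t; apply/asboolP.
  - by move=> r s t /asboolP rs /asboolP st; apply/asboolP; apply: subset_trans rs st.
  move=> C C_tot; case: (pselect (exists t, C t)) => [[t0 Ct0]|nC]; last first.
    by exists base => t Ct; case: nC; exists t.
  have U_ext : ext_graph (\bigcup_(G in sval @` C) G).
    apply: (ext_graph_chain (G0 := sval t0)); last by exists t0.
    - by move=> _ [t _ <-]; exact: (svalP t).
    - move=> _ _ [s Cs <-] [t Ct <-].
      by case: (C_tot _ _ Cs Ct) => /asboolP; [left|right].
  exists (exist _ _ U_ext) => t Ct; apply/asboolP => yu Gyu /=.
  by exists (sval t) => //; exists t.
exists G => // G' G'_ext GG'.
by apply/asboolP; apply: (G_max (exist _ G' G'_ext)); apply/asboolP.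
Qed.

(* a maximal partial extension is defined everywhere, so it is the graph of
   the required extension *)
Lemma baer_extension :
  exists2 k : Y -> M -> A, SHom act k & forall x m, k (g x) m = h x m.
Proof.
have [G G_ext G_max] := maximal_ext_graph.
have G_dom y0 : graph_dom G y0.
  have [gamma gamma_lin gamma_ext] :=
    ext (conductor_ideal G_ext y0) (conductor_hom G_ext y0).
  have step_ext := graph_step_ext G_ext gamma_lin gamma_ext.
  have [u Gu] := graph_step_y0 G_ext y0 gamma.
  by exists u; apply: (G_max _ step_ext (graph_step_sub y0 gamma_lin)).
have [_ Gg G_lin GD GM] := G_ext.
have G_val y : G (y, graph_val G y).
  by have [u Gu] := G_dom y; rewrite (graph_valE G_ext Gu).
exists (graph_val G) => [|x m]; last by rewrite (graph_valE G_ext (Gg x)).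
split=> [y | y z m | s y m].
- exact: G_lin (G_val y).
- by rewrite (graph_valE G_ext (GD _ _ _ _ (G_val y) (G_val z))).
- by rewrite (graph_valE G_ext (GM _ _ _ (G_val y))).
Qed.
End Baer.

Lemma ideals_extend_Hom_injective : ideals_extend -> Hom_injective act A.
Proof. by move=> ext X Y g h g_lin g_inj h_hom; apply: baer_extension. Qed.

(* Injectivity-type conditions on Hom_R(M,A) give the classes E_M and F_M:
   for a monomorphism alpha : N -> M, the homomorphism  s |-> beta o alpha^-1 o s
   is defined on the right ideal of the s mapping M into alpha(N), which
   contains the endomorphisms  alpha o p o delta_i  coming from a generation
   p : M^(I) -> N of N; a gamma extending it satisfies beta = gamma o alpha. *)
Section Factorization.
Variables (N : lmodType R^c) (alpha : N -> M) (beta : N -> A).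
Hypotheses (alpha_lin : linear alpha) (alpha_inj : injective alpha)
  (beta_lin : linear beta).

Definition preimage_ideal (s : S) : Prop := forall m, exists n, alpha n = act s m.

Definition alpha_inv (y : M) : N :=
  if pselect (exists n, alpha n = y) is left e then projT1 (cid e) else 0.

Lemma alpha_invK n : alpha_inv (alpha n) = n.
Proof.
rewrite /alpha_inv; case: pselect => [e|[]]; last by exists n.
exact/alpha_inj/(projT2 (cid e)).
Qed.

Lemma preimage_ideal_right : right_ideal preimage_ideal.
Proof.
split=> [m | s t Js Jt m | s t Js m]; rewrite ?act0 ?actD ?actM //.
- by exists 0; rewrite (lin0 alpha_lin).
- by have [[n1 <-] [n2 <-]] := (Js m, Jt m); exists (n1 + n2); rewrite (linD alpha_lin).
Qed.

Definition pull_hom (s : S) (m : M) : A := beta (alpha_inv (act s m)).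

Lemma pull_hom_on (J : S -> Prop) :
  (forall s, J s -> preimage_ideal s) -> SHom_on act J pull_hom.
Proof.
move=> JP; split=> [s Js a u v | s t m Js Jt | s t m _]; rewrite /pull_hom.
- have [[n1 e1] [n2 e2]] := (JP s Js u, JP s Js v).
  rewrite act_lin -e1 -e2 -(linZ alpha_lin) -(linD alpha_lin).
  by rewrite !alpha_invK beta_lin.
- have [[n1 e1] [n2 e2]] := (JP s Js m, JP t Jt m).
  by rewrite actD -e1 -e2 -(linD alpha_lin) !alpha_invK (linD beta_lin).
- by rewrite actM.
Qed.

Lemma generator_endos (I : Type) (p : (I -> M) -> N) : epi_from_sum p ->
  exists sigma : I -> S, forall i m, act (sigma i) m = alpha (p (delta i m)).
Proof.
move=> [p_lin _].
have delta_lin i : linear (fun m => alpha (p (delta i m))).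
  move=> a u v; rewrite -alpha_lin -p_lin; try exact: delta_finsupp.
  do 2 f_equal.
  apply: funext => j; rewrite /delta.
  by destruct (pselect (j = i)); rewrite ?scaler0 ?addr0.
exists (fun i => projT1 (cid (act_onto (delta_lin i)))) => i.
exact: projT2 (cid (act_onto (delta_lin i))).
Qed.

Lemma factor_through (I : Type) (p : (I -> M) -> N) (sigma : I -> S)
    (gamma : M -> A) :
  epi_from_sum p -> (forall i m, act (sigma i) m = alpha (p (delta i m))) ->
  linear gamma -> (forall i m, pull_hom (sigma i) m = gamma (act (sigma i) m)) ->
  forall n, beta n = gamma (alpha n).
Proof.
move=> p_epi sigmaE gamma_lin gammaE n; have [r ->] := epi_span p_epi n.
rewrite (lin_sum beta_lin) (lin_sum alpha_lin) (lin_sum gamma_lin).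
apply: eq_bigr => -[i m] _ /=.
by rewrite -sigmaE -gammaE /pull_hom sigmaE alpha_invK.
Qed.
End Factorization.

Lemma ideals_extend_class_E : ideals_extend -> class_E M A.
Proof.
move=> ext N alpha beta [I [p p_epi]] alpha_lin alpha_inj beta_lin.
have [sigma sigmaE] := generator_endos alpha_lin p_epi.
have [gamma gamma_lin gammaE] := ext _ _ (preimage_ideal_right alpha_lin)
  (pull_hom_on alpha_lin alpha_inj beta_lin (fun s Js => Js)).
exists gamma; split=> //.
apply: (factor_through alpha_lin alpha_inj beta_lin p_epi sigmaE) => // i m.
by apply: gammaE => m'; rewrite sigmaE; exists (p (delta i m')).
Qed.

Lemma fg_ideals_extend_class_F : fg_ideals_extend -> class_F M A.
Proof.
move=> ext N alpha beta [n [p [_ p_epi]]] alpha_lin alpha_inj beta_lin.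
have [sigma sigmaE] := generator_endos alpha_lin p_epi.
pose gens := [seq sigma i | i <- enum 'I_n].
have sigmaP i : preimage_ideal alpha (sigma i).
  by move=> m; rewrite sigmaE; exists (p (delta i m)).
have gensP s : in_right_ideal gens s -> preimage_ideal alpha s.
  apply: in_right_ideal_min (preimage_ideal_right alpha_lin) _.
  by move=> _ /mapP[i _ ->].
have [gamma gamma_lin gammaE] :=
  ext gens _ (pull_hom_on alpha_lin alpha_inj beta_lin gensP).
exists gamma; split=> //.
apply: (factor_through alpha_lin alpha_inj beta_lin p_epi sigmaE) => // i m.
by apply/gammaE/in_right_ideal_gen/map_f; rewrite mem_enum.
Qed.

(* Flatness of M over S turns the classes E_M and F_M into extension
   properties: for a right ideal J, the submodule JM of M is (finitely)
   M-generated, and an S-homomorphism phi : J -> Hom_R(M,A) induces the map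
   JM -> A,  sum_i s_i m_i |-> sum_i phi(s_i)(m_i),  which is well defined
   because J (x)_S M -> S (x)_S M = M is injective. *)
Section Flat.
Hypothesis flat : flat_left act.

(* S (x)_S M = M: a formal sum vanishing in M vanishes in the tensor product *)
Lemma regular_tensor_zero (t : seq ((S^c)^o * M)) :
  \sum_(q <- t) act q.1 q.2 = 0 -> tensor_zero act t.
Proof.
move=> t0 Z b [_ bD bM].
have b0 : b 1 0 = 0 by apply: (addrI (b 1 0)); rewrite -bD !addr0.
have b_act x m : b x m = b 1 (act x m) by rewrite -bM regular_scale mul1r.
under eq_bigr do rewrite b_act.
by rewrite -(big_morph (b 1) (bD 1) b0) t0.
Qed.

Section Ideal.
Variables (J : S -> Prop) (J_ideal : right_ideal J) (phi : S -> M -> A).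
Hypothesis phi_hom : SHom_on act J phi.

Lemma phi_lin s : J s -> linear (phi s).
Proof. by case: phi_hom => phi_lin _ _; apply: phi_lin. Qed.

(* a relation  sum_i s_i m_i = 0  in M with all s_i in J already holds in
   J (x)_S M, by flatness, so it is respected by the balanced map phi *)
Lemma flat_vanishing (r : seq (S * M)) : (forall q, q \in r -> J q.1) ->
  \sum_(q <- r) act q.1 q.2 = 0 -> \sum_(q <- r) phi q.1 q.2 = 0.
Proof.
move=> rJ r0; pose X := submod_type (ideal_submodule J_ideal).
have XJ (x : X) : J (val x) := subP x.
pose t : seq (X * M) := [seq (insubd (0 : X) q.1, q.2) | q <- r].
have tE : [seq ((val : X -> (S^c)^o) q.1, q.2) | q <- t] = r.
  rewrite -map_comp -[RHS]map_id; apply/eq_in_map => -[s m] /rJ Js /=.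
  by rewrite insubdK.
have t0 : tensor_zero act t.
  by apply: (flat (linearP val) val_inj); rewrite tE; apply: regular_tensor_zero.
have bal : balanced act (fun (x : X) m => phi (val x) m).
  have [_ phiD phiM] := phi_hom.
  split=> [x y m | x m m' | s x m].
  - by rewrite raddfD phiD //; apply: XJ.
  - by rewrite (linD (phi_lin (XJ x))).
  - exact: phiM (val x) s m (XJ x).
by rewrite -tE big_map; apply: t0 A _ bal.
Qed.

Definition JM_pred (x : M) : Prop :=
  exists2 r : seq (S * M), (forall q, q \in r -> J q.1) & x = \sum_(q <- r) act q.1 q.2.

Lemma JM_pred0 : JM_pred 0.
Proof. by exists [::]; rewrite ?big_nil. Qed.

Lemma JM_predL a u v : JM_pred u -> JM_pred v -> JM_pred (a *: u + v).
Proof.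
move=> [ru ruJ ->] [rv rvJ ->]; exists ([seq (q.1, a *: q.2) | q <- ru] ++ rv).
  by move=> q; rewrite mem_cat => /orP[/mapP[q' /ruJ ? ->] | /rvJ].
rewrite big_cat big_map scaler_sumr; congr (_ + _); apply: eq_bigr => q _.
by rewrite (linZ (act_lin _)).
Qed.

Definition JM : submodule M := Submodule JM_pred0 JM_predL.
Local Notation NJ := (submod_type JM).

Definition JM_elt (s : S) (m : M) : NJ := if `[< J s >] then insubd 0 (act s m) else 0.

Lemma JM_eltE s m : J s -> val (JM_elt s m) = act s m.
Proof.
move=> Js; rewrite /JM_elt ifT; last exact/asboolP.
by rewrite insubdK //; exists [:: (s, m)]; rewrite ?big_seq1 // => q /[!inE]/eqP->.
Qed.

Lemma JM_elt_lin s : linear (JM_elt s).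
Proof.
move=> a u v; case: (asboolP (J s)) => Js; last first.
  by rewrite /JM_elt !ifN; [rewrite scaler0 addr0 | apply/asboolP ..].
by apply: val_inj; rewrite linearP /= !JM_eltE // (act_lin s).
Qed.

Lemma JM_span (x : NJ) : exists2 r : seq (S * M),
  (forall q, q \in r -> J q.1) & x = \sum_(q <- r) JM_elt q.1 q.2.
Proof.
have [r rJ ex] := subP x; exists r => //; apply: val_inj.
by rewrite ex raddf_sum /=; apply: eq_big_seq => q /rJ Jq; rewrite JM_eltE.
Qed.

Lemma JM_generated : M_generated M NJ.
Proof.
apply: (M_generated_of_span JM_elt_lin) => x.
by have [r _ ->] := JM_span x; exists r.
Qed.

Lemma JM_fin_generated (gens : seq S) :
    (forall s, J s -> in_right_ideal gens s) -> (forall x, x \in gens -> J x) ->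
  fin_M_generated M NJ.
Proof.
move=> Jgens gensJ; pose n := size gens.
have gensJ' (k : 'I_n) : J gens`_k by apply/gensJ/mem_nth.
apply: (fin_M_generated_of_span (fun k : 'I_n => JM_elt_lin gens`_k)) => x.
have [r rJ ->] := JM_span x; rewrite big_seq.
apply: (big_ind (fun y => exists f, y = \sum_(k < n) JM_elt gens`_k (f k))).
- by exists (fun _ => 0); rewrite big1 // => k _; rewrite (lin0 (JM_elt_lin _)).
- move=> _ _ [f ->] [f' ->]; exists (fun k => f k + f' k).
  by rewrite -big_split; apply: eq_bigr => k _; rewrite (linD (JM_elt_lin _)).
- move=> [s m] /rJ /= Js; have [c ec] := Jgens s Js; exists (fun k => act (c k) m).
  apply: val_inj; rewrite raddf_sum /= JM_eltE // {1}ec act_sum.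
  by apply: eq_bigr => k _; rewrite JM_eltE // actM.
Qed.

Definition JM_rep (x : NJ) : seq (S * M) := s2val (cid2 (subP x : JM_pred (val x))).

Lemma JM_repP (x : NJ) :
  (forall q, q \in JM_rep x -> J q.1) /\ val x = \sum_(q <- JM_rep x) act q.1 q.2.
Proof. by rewrite /JM_rep; case: cid2. Qed.

Definition beta_JM (x : NJ) : A := \sum_(q <- JM_rep x) phi q.1 q.2.

Lemma beta_JM_E (x : NJ) (r : seq (S * M)) : (forall q, q \in r -> J q.1) ->
  val x = \sum_(q <- r) act q.1 q.2 -> beta_JM x = \sum_(q <- r) phi q.1 q.2.
Proof.
move=> rJ ex; have [r'J ex'] := JM_repP x.
have actN' : \sum_(q <- r) act q.1 (- q.2) = - \sum_(q <- r) act q.1 q.2.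
  by rewrite -sumrN; apply: eq_bigr => q _; rewrite (linN (act_lin _)).
have phiN : \sum_(q <- r) phi q.1 (- q.2) = - \sum_(q <- r) phi q.1 q.2.
  by rewrite -sumrN; apply: eq_big_seq => q /rJ Jq; rewrite (linN (phi_lin Jq)).
apply/eqP; rewrite -subr_eq0; apply/eqP.
have := @flat_vanishing (JM_rep x ++ [seq (q.1, - q.2) | q <- r]).
rewrite !big_cat !big_map /= phiN actN' -ex' -ex subrr; apply=> //.
by move=> q; rewrite mem_cat => /orP[/r'J | /mapP[q' /rJ ? ->]].
Qed.

Lemma beta_JM_lin : linear beta_JM.
Proof.
move=> a x y; have [xJ ex] := JM_repP x; have [yJ ey] := JM_repP y.
rewrite (@beta_JM_E _ ([seq (q.1, a *: q.2) | q <- JM_rep x] ++ JM_rep y)).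
- rewrite big_cat big_map /beta_JM scaler_sumr; congr (_ + _).
  by apply: eq_big_seq => q /xJ Jq; rewrite (linZ (phi_lin Jq)).
- by move=> q; rewrite mem_cat => /orP[/mapP[q' /xJ ? ->] | /yJ].
rewrite linearP /= ex ey big_cat big_map scaler_sumr; congr (_ + _).
by apply: eq_bigr => q _; rewrite (linZ (act_lin _)).
Qed.

Lemma JM_factor_extends :
  (exists gamma : M -> A, linear gamma /\ forall x : NJ, beta_JM x = gamma (val x)) ->
  extends_from J phi.
Proof.
move=> [gamma [gamma_lin gammaE]]; exists gamma => // s m Js.
rewrite -(JM_eltE m Js) -gammaE (@beta_JM_E _ [:: (s, m)]) ?big_seq1 ?JM_eltE //.
by move=> q /[!inE] /eqP->.
Qed.
End Ideal.

Lemma class_E_ideals_extend : class_E M A -> ideals_extend.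
Proof.
move=> cE J phi J_ideal phi_hom; apply: (JM_factor_extends J_ideal phi_hom).
apply: cE; [exact: JM_generated | exact: linearP | exact: val_inj |].
exact (beta_JM_lin J_ideal phi_hom).
Qed.

Lemma class_F_fg_ideals_extend : class_F M A -> fg_ideals_extend.
Proof.
move=> cF gens phi phi_hom.
apply: (JM_factor_extends (right_ideal_gen gens) phi_hom); apply: cF.
- by apply: (@JM_fin_generated _ gens) => // x; apply: in_right_ideal_gen.
- exact: linearP.
- exact: val_inj.
- exact (beta_JM_lin (right_ideal_gen gens) phi_hom).
Qed.
End Flat.
End HomModule.

Theorem mainTheorem17 (R S : pzRingType) (M A : GRing.Lmodule.type R^c)
    (act : S -> M -> M) :
  is_End act -> flat_left act ->
  (class_E M A <-> Hom_injective act A) /\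
  (class_F M A <-> Hom_f_injective act A).
Proof.
move=> act_End flat; split; last rewrite Hom_f_injective_iff //; split.
- move=> cE; apply: (ideals_extend_Hom_injective act_End).
  exact: class_E_ideals_extend.
- move=> inj; apply: (ideals_extend_class_E act_End).
  exact: Hom_injective_extend.
- exact: class_F_fg_ideals_extend.
- exact: fg_ideals_extend_class_F.
Qed.
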